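(* Let $n\ge1$. For every $X\in\mathrm{s}^n\mathcal S$, the canonical maps $$\operatorname{colim}_{\Delta X}\Delta_{\mathrm{rel}}F\to\Delta_{\mathrm{rel}}X\in\mathbf{Rel}^n\mathbf{Cat}\quad\text{and}\quad \operatorname{colim}_{\Delta X}N\Delta_{\mathrm{rel}}F\to N\Delta_{\mathrm{rel}}X\in\mathrm{s}^n\mathcal S$$ are isomorphisms.
   Context: An $n$-relative category $\mathcal C=(a\mathcal C,v_1\mathcal C,\dots,v_n\mathcal C,w\mathcal C)$ consists of a category $a\mathcal C$ and subcategories $v_1\mathcal C,\dots,v_n\mathcal C,w\mathcal C\subset a\mathcal C$, each containing all objects, with $w\mathcal C\subset v_i\mathcal C$ for all $i$, such that every map of $a\mathcal C$ is a finite composite of maps in the $v_i\mathcal C$, and every relation in $a\mathcal C$ follows from commutativity of squares $y_2x_1=x_2y_1$ with $x_1,x_2\in v_i\mathcal C$, $y_1,y_2\in v_j\mathcal C$. $\mathbf{Rel}^n\mathbf{Cat}$ is the category of small $n$-relative categories and functors of ambient categories preserving $w$ and each $v_i$. $\mathrm{s}^n\mathcal S$ is the category of $(n+1)$-simplicial sets with standard multisimplices $\Delta[p_n,\dots,p_1,q]$; $\Delta[-]$ is the full subcategory of standard multisimplices; a map $\Delta[p_n,\dots,p_1,q]\to\Delta[p_n',\dots,p_1',q']$ is a tuple of order-preserving maps $\mathbf p_i\to\mathbf p_i'$, $\mathbf q\to\mathbf q'$ (with $\mathbf p$ the poset $0\to\cdots\to p$). $\Delta X=\Delta[-]\downarrow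 X$ and $F\colon\Delta X\to\mathrm{s}^n\mathcal S$ sends $\Delta[p_n,\dots,p_1,q]\to X$ to $\Delta[p_n,\dots,p_1,q]$. $\Delta_{\mathrm{rel}}[-]$ is the $n$-relative category with $a\Delta_{\mathrm{rel}}[-]=\Delta[-]$, $v_i\Delta_{\mathrm{rel}}[-]$ the maps whose component $\mathbf p_i\to\mathbf p_i'$ sends $p_i$ to $p_i'$, and $w\Delta_{\mathrm{rel}}[-]=\bigcap_iv_i\Delta_{\mathrm{rel}}[-]$. For $X\in\mathrm{s}^n\mathcal S$, $\Delta_{\mathrm{rel}}X=\Delta_{\mathrm{rel}}[-]\downarrow X$ is the $n$-relative over category: ambient category $\Delta X$, and a map lies in $v_i$ (resp. $w$) iff its underlying map in $\Delta[-]$ lies in $v_i\Delta_{\mathrm{rel}}[-]$ (resp. $w\Delta_{\mathrm{rel}}[-]$); this is functorial in $X$, giving $\Delta_{\mathrm{rel}}\colon\mathrm{s}^n\mathcal S\to\mathbf{Rel}^n\mathbf{Cat}$. For $p\ge0$, $|\mathbf p|$ is the discrete subcategory of $\mathbf p$, and $\mathbf p_n^{v_n}\times\cdots\times\mathbf p_1^{v_1}\times\mathbf q^w$ is the $n$-relative category with ambient category $\mathbf p_n\times\cdots\times\mathbf p_1\times\mathbf q$, $w=|\mathbf p_n|\times\cdots\times|\mathbf p_1|\times\mathbf q$, $v_i=|\mathbf p_n|\times\cdots\times\mathbf p_i\times\cdots\times|\mathbf p_1|\times\mathbf q$. The $n$-simplicial nerve $N\mathcal C$ has as $(p_n,\dots,p_1,q)$-simplices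 the relative functors $\mathbf p_n^{v_n}\times\cdots\times\mathbf p_1^{v_1}\times\mathbf q^w\to\mathcal C$. *)

From Stdlib Require Import FunctionalExtensionality ProofIrrelevance Relations.
From HB Require Import structures.
From mathcomp Require Import all_boot.

Set Implicit Arguments.
Unset Strict Implicit.
Unset Printing Implicit Defensive.

Record PreRelCat (n : nat) := {
  ob : Type;
  hom : ob -> ob -> Type;
  idm : forall a, hom a a;
  comp : forall a b c, hom b c -> hom a b -> hom a c;
  vmor : 'I_n -> forall a b, hom a b -> Prop;          (* v_{i+1} *)
  wmor : forall a b, hom a b -> Prop }.

Arguments hom {n} _ _ _.
Arguments idm {n _} _.
Arguments comp {n _ _ _ _} _ _.
Arguments vmor {n _} _ {_ _} _.
Arguments wmor {n _ _ _} _.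

Definition vgen n (C : PreRelCat n) (a b : ob C) (f : hom C a b) : Prop :=
  exists i, vmor i f.

(* finite composable strings of generators (paths in the free category
   on the graph of all maps of the v_i C) *)
Inductive vpath n (C : PreRelCat n) (a : ob C) : ob C -> Type :=
  | vnil : vpath a a
  | vsnoc : forall b c, vpath a b -> forall f : hom C b c, vgen f -> vpath a c.
Arguments vpath {n} _ _ _.
Arguments vnil {n} _ _.
Arguments vsnoc {n _ _ _ _} _ _ _.

Fixpoint veval n (C : PreRelCat n) (a b : ob C) (p : vpath C a b) : hom C a b :=
  match p with
  | vnil => idm a
  | vsnoc _ _ p' f _ => comp f (veval p')
  end.

Fixpoint vcat n (C : PreRelCat n) (a b c : ob C) (p : vpath C a b)
  (q : vpath C b c) : vpath C a c :=
  match q in vpath _ _ c' return vpath C a c' with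
  | vnil => p
  | vsnoc _ _ q' f h => vsnoc (vcat p q') f h
  end.

Inductive vbasic n (C : PreRelCat n) : forall a b : ob C, vpath C a b -> vpath C a b -> Prop :=
  | vb_id (a : ob C) (h : vgen (idm a)) :
      vbasic (vsnoc (vnil C a) (idm a) h) (vnil C a)
  | vb_sq (i j : 'I_n) (a b c d : ob C) (x1 : hom C a b) (y2 : hom C b d)
      (y1 : hom C a c) (x2 : hom C c d) hx1 hy2 hy1 hx2 :
      vmor i x1 -> vmor i x2 -> vmor j y1 -> vmor j y2 ->
      comp y2 x1 = comp x2 y1 ->
      vbasic (vsnoc (vsnoc (vnil C a) x1 hx1) y2 hy2)
             (vsnoc (vsnoc (vnil C a) y1 hy1) x2 hx2).

Definition vstep n (C : PreRelCat n) (a b : ob C) (p q : vpath C a b) : Prop :=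
  exists (x y : ob C) (u : vpath C a x) (s t : vpath C x y) (w : vpath C y b),
    [/\ vbasic s t, p = vcat (vcat u s) w & q = vcat (vcat u t) w].

Definition is_nrelcat n (C : PreRelCat n) : Prop :=
  [/\
      [/\ (forall a b (f : hom C a b), comp (idm b) f = f),
          (forall a b (f : hom C a b), comp f (idm a) = f) &
          (forall a b c d (f : hom C a b) (g : hom C b c) (h : hom C c d),
             comp h (comp g f) = comp (comp h g) f)],
      [/\ (forall i a, vmor i (idm a : hom C a a)),
          (forall i a b c (f : hom C a b) (g : hom C b c),
              vmor i f -> vmor i g -> vmor i (comp g f)),
          (forall a, wmor (idm a : hom C a a)),
          (forall a b c (f : hom C a b) (g : hom C b c),
              wmor f -> wmor g -> wmor (comp g f)) &
          (forall i a b (f : hom C a b), wmor f -> vmor i f)],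
      (forall a b (f : hom C a b), exists p : vpath C a b, veval p = f) &
      (* every relation follows from the commutative squares *)
      (forall a b (p q : vpath C a b), veval p = veval q ->
          clos_refl_sym_trans _ (@vstep n C a b) p q)].

Record PreFunctor n (C D : PreRelCat n) := {
  fob : ob C -> ob D;
  fhom : forall a b, hom C a b -> hom D (fob a) (fob b) }.
Arguments fhom {n _ _} _ {_ _} _.

Definition is_relfunctor n (C D : PreRelCat n) (F : PreFunctor C D) : Prop :=
  [/\ (forall a, fhom F (idm a) = idm (fob F a)),
      (forall a b c (f : hom C a b) (g : hom C b c),
          fhom F (comp g f) = comp (fhom F g) (fhom F f)),
      (forall i a b (f : hom C a b), vmor i f -> vmor i (fhom F f)) &
      (forall a b (f : hom C a b), wmor f -> wmor (fhom F f))].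

Definition fcomp n (C D E : PreRelCat n) (G : PreFunctor D E) (F : PreFunctor C D)
  : PreFunctor C E :=
  {| fob := fun a => fob G (fob F a); fhom := fun a b f => fhom G (fhom F f) |}.

Definition feq n (C D : PreRelCat n) (F G : PreFunctor C D) : Prop :=
  (forall a, fob F a = fob G a) /\
  (forall a b (f : hom C a b),
     existT (fun ab : ob D * ob D => hom D ab.1 ab.2) (fob F a, fob F b) (fhom F f)
     = existT (fun ab : ob D * ob D => hom D ab.1 ab.2) (fob G a, fob G b) (fhom G f)).

Lemma is_relfunctor_comp n (C D E : PreRelCat n) (G : PreFunctor D E) (F : PreFunctor C D) :
  is_relfunctor G -> is_relfunctor F -> is_relfunctor (fcomp G F).
Proof.
case=> G1 G2 G3 G4 [F1 F2 F3 F4]; split => /=.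
- by move=> a; rewrite F1 G1.
- by move=> a b c f g; rewrite F2 G2.
- by move=> i a b f /F3 /G3.
- by move=> a b f /F4 /G4.
Qed.

(* (n+1)-simplicial sets.  A multisimplex Delta[p_n,...,p_1,q] is encoded by
   a shape (ps, q) with ps : n.-tuple nat, tnth ps i = p_{i+1}.           *)

Definition shape (n : nat) := (n.-tuple nat * nat)%type.

Definition monob (p p' : nat) (f : {ffun 'I_p.+1 -> 'I_p'.+1}) : bool :=
  [forall i : 'I_p.+1, [forall j : 'I_p.+1, (i <= j) ==> (f i <= f j)]].

Definition mono (p p' : nat) := {f : {ffun 'I_p.+1 -> 'I_p'.+1} | monob f}.

Lemma monob_id p : monob [ffun i : 'I_p.+1 => i].
Proof. by apply/forallP => i; apply/forallP => j; rewrite !ffunE; apply/implyP. Qed.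

Definition mono_id p : mono p p := exist (@monob p p) _ (monob_id p).

Lemma monob_comp p p' p'' (g : mono p' p'') (f : mono p p') :
  monob [ffun i => sval g (sval f i)].
Proof.
apply/forallP => i; apply/forallP => j; apply/implyP => hij; rewrite !ffunE.
have hf := forallP (forallP (svalP f) i) j; rewrite hij /= in hf.
exact: (implyP (forallP (forallP (svalP g) (sval f i)) (sval f j)) hf).
Qed.

Definition mono_comp p p' p'' (g : mono p' p'') (f : mono p p') : mono p p'' :=
  exist (@monob p p'') _ (monob_comp g f).

Definition smap n (s s' : shape n) :=
  ((forall i : 'I_n, mono (tnth s.1 i) (tnth s'.1 i)) * mono s.2 s'.2)%type.

Definition smap_id n (s : shape n) : smap s s :=
  (fun i => mono_id (tnth s.1 i), mono_id s.2).

Definition smap_comp n (s s' s'' : shape n) (g : smap s' s'') (f : smap s s') : smap s s'' :=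
  (fun i => mono_comp (g.1 i) (f.1 i), mono_comp g.2 f.2).

(* v_{i+1} Delta_rel[-] : the i-th component sends p_i to p_i' ;
   w Delta_rel[-] : the intersection of all v_i *)
Definition smap_v n (s s' : shape n) (i : 'I_n) (f : smap s s') : bool :=
  sval (f.1 i) ord_max == ord_max.
Definition smap_w n (s s' : shape n) (f : smap s s') : bool :=
  [forall i, smap_v i f].

Lemma mono_eq p p' (f g : mono p p') : sval f =1 sval g -> f = g.
Proof.
case: f g => [f hf] [g hg] /= e.
have efg : f = g by apply/ffunP.
by subst; congr exist; apply: eq_irrelevance.
Qed.

Lemma smap_compA n (s1 s2 s3 s4 : shape n) (f : smap s1 s2) (g : smap s2 s3)
  (h : smap s3 s4) : smap_comp h (smap_comp g f) = smap_comp (smap_comp h g) f.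
Proof.
rewrite /smap_comp /=; congr pair.
  by apply: functional_extensionality_dep => i; apply: mono_eq => x; rewrite /= !ffunE.
by apply: mono_eq => x; rewrite /= !ffunE.
Qed.

Lemma smap_comp_id n (s s' : shape n) (f : smap s s') : smap_comp f (smap_id s) = f.
Proof.
case: f => f1 f2; rewrite /smap_comp /=; congr pair.
  by apply: functional_extensionality_dep => i; apply: mono_eq => x; rewrite /= !ffunE.
by apply: mono_eq => x; rewrite /= !ffunE.
Qed.

Record MSSet (n : nat) := {
  sx : shape n -> Type;
  sact : forall s s' : shape n, smap s s' -> sx s' -> sx s }.
Arguments sact {n _ _ _} _ _.

Definition is_msset n (X : MSSet n) : Prop :=
  (forall s (x : sx X s), sact (smap_id s) x = x) /\
  (forall s s' s'' (f : smap s s') (g : smap s' s'') (x : sx X s''),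
      sact (smap_comp g f) x = sact f (sact g x)).

Definition is_msmap n (X Y : MSSet n) (m : forall s, sx X s -> sx Y s) : Prop :=
  forall s s' (f : smap s s') (x : sx X s'), m s (sact f x) = sact f (m s' x).

Definition Rep n (s : shape n) : MSSet n :=
  {| sx := fun s0 => smap s0 s; sact := fun s0 s1 f g => smap_comp g f |}.

Lemma Rep_msset n (s : shape n) : is_msset (Rep s).
Proof. by split => /= *; [exact: smap_comp_id | exact: smap_compA]. Qed.

Lemma sig_eq (A : Type) (P : A -> Prop) (x y : {a | P a}) :
  sval x = sval y -> x = y.
Proof. by case: x y => [a pa] [b pb] /= e; subst; congr exist; apply: proof_irrelevance. Qed.

Section DeltaRel.
Variables (n : nat) (X : MSSet n) (HX : is_msset X).

Definition DRob := {s : shape n & sx X s}.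
Definition DRhom (o o' : DRob) :=
  {f : smap (projT1 o) (projT1 o') | sact f (projT2 o') = projT2 o}.

Definition DRidm (o : DRob) : DRhom o o :=
  exist _ (smap_id (projT1 o)) (proj1 HX _ (projT2 o)).

Lemma DRcomp_proof (o1 o2 o3 : DRob) (g : DRhom o2 o3) (f : DRhom o1 o2) :
  sact (smap_comp (sval g) (sval f)) (projT2 o3) = projT2 o1.
Proof. by rewrite (proj2 HX) (svalP g) (svalP f). Qed.

Definition DRcomp (o1 o2 o3 : DRob) (g : DRhom o2 o3) (f : DRhom o1 o2) : DRhom o1 o3 :=
  exist _ _ (DRcomp_proof g f).

Definition DeltaRel : PreRelCat n :=
  {| ob := DRob; hom := DRhom; idm := DRidm; comp := DRcomp;
     vmor := fun i o o' f => is_true (smap_v i (sval f));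
     wmor := fun o o' f => is_true (smap_w (sval f)) |}.
End DeltaRel.

Section DeltaRelF.
Variables (n : nat) (X Y : MSSet n) (HX : is_msset X) (HY : is_msset Y).
Variables (m : forall s, sx X s -> sx Y s) (Hm : is_msmap m).

Lemma DRF_proof (o o' : ob (DeltaRel HX)) (f : hom (DeltaRel HX) o o') :
  sact (sval f) (m (projT2 o')) = m (projT2 o).
Proof. by rewrite -Hm (svalP f). Qed.

Definition DeltaRelF : PreFunctor (DeltaRel HX) (DeltaRel HY) :=
  {| fob := fun o : ob (DeltaRel HX) => existT _ (projT1 o) (m (projT2 o)) : ob (DeltaRel HY);
     fhom := fun (o o' : ob (DeltaRel HX)) (f : hom (DeltaRel HX) o o') =>
       exist _ (sval f) (DRF_proof f) |}.

Lemma DeltaRelF_rel : is_relfunctor DeltaRelF.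
Proof. by split => * //; apply: sig_eq. Qed.
End DeltaRelF.

Definition yon n (X : MSSet n) (s : shape n) (x : sx X s) :
  forall s0, sx (Rep s) s0 -> sx X s0 := fun s0 g => sact g x.

Lemma yon_msmap n (X : MSSet n) (HX : is_msset X) s (x : sx X s) : is_msmap (yon x).
Proof. by move=> s0 s1 f g; rewrite /yon /= (proj2 HX). Qed.

Definition post n (s s' : shape n) (f : smap s s') :
  forall s0, sx (Rep s) s0 -> sx (Rep s') s0 := fun s0 g => smap_comp f g.

Lemma post_msmap n (s s' : shape n) (f : smap s s') : is_msmap (post f).
Proof. by move=> s0 s1 h g; rewrite /post /= smap_compA. Qed.

(* Delta_rel F at the object (s, x) of Delta X : Delta_rel Delta[s] *)
Definition DRep n (s : shape n) : PreRelCat n := DeltaRel (Rep_msset s).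

(* Delta_rel F on a morphism u of Delta X *)
Definition DRmap n (X : MSSet n) (HX : is_msset X) (o o' : ob (DeltaRel HX))
  (u : hom (DeltaRel HX) o o') : PreFunctor (DRep (projT1 o)) (DRep (projT1 o')) :=
  DeltaRelF (Rep_msset _) (Rep_msset _) (post_msmap (sval u)).

Lemma DRmap_rel n (X : MSSet n) (HX : is_msset X) (o o' : ob (DeltaRel HX))
  (u : hom (DeltaRel HX) o o') : is_relfunctor (DRmap u).
Proof. exact: DeltaRelF_rel. Qed.

Definition DRleg n (X : MSSet n) (HX : is_msset X) (o : ob (DeltaRel HX)) :
  PreFunctor (DRep (projT1 o)) (DeltaRel HX) :=
  DeltaRelF (Rep_msset _) HX (yon_msmap HX (projT2 o)).

Lemma DRleg_rel n (X : MSSet n) (HX : is_msset X) (o : ob (DeltaRel HX)) :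
  is_relfunctor (DRleg o).
Proof. exact: DeltaRelF_rel. Qed.

(* The n-relative category  p_n^{v_n} x ... x p_1^{v_1} x q^w  and the nerve *)

Definition gob n (s : shape n) :=
  ((forall i : 'I_n, 'I_(tnth s.1 i).+1) * 'I_s.2.+1)%type.

Definition gle n (s : shape n) (a b : gob s) : bool :=
  [forall i, a.1 i <= b.1 i] && (a.2 <= b.2).

Lemma gle_refl n (s : shape n) (a : gob s) : gle a a.
Proof. by rewrite /gle leqnn andbT; apply/forallP => i. Qed.

Lemma gle_trans n (s : shape n) (a b c : gob s) : gle b c -> gle a b -> gle a c.
Proof.
case/andP => /forallP h1 h2 /andP [/forallP h3 h4].
rewrite /gle (leq_trans h4 h2) andbT; apply/forallP => i.
exact: leq_trans (h3 i) (h1 i).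
Qed.

Definition Grid n (s : shape n) : PreRelCat n :=
  {| ob := gob s; hom := fun a b => is_true (gle a b);
     idm := @gle_refl n s; comp := fun a b c g f => gle_trans g f;
     vmor := fun i a b _ => forall j, j != i -> a.1 j = b.1 j;
     wmor := fun a b _ => forall j, a.1 j = b.1 j |}.

Definition gmap_ob n (s s' : shape n) (f : smap s s') (a : gob s) : gob s' :=
  (fun i => sval (f.1 i) (a.1 i), sval f.2 a.2).

Lemma gmap_le n (s s' : shape n) (f : smap s s') (a b : gob s) :
  gle a b -> gle (gmap_ob f a) (gmap_ob f b).
Proof.
case/andP => /forallP h1 h2; apply/andP; split.
  apply/forallP => i /=.
  exact: (implyP (forallP (forallP (svalP (f.1 i)) (a.1 i)) (b.1 i)) (h1 i)).
exact: (implyP (forallP (forallP (svalP f.2) a.2) b.2) h2).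
Qed.

Definition gridmap n (s s' : shape n) (f : smap s s') : PreFunctor (Grid s) (Grid s') :=
  @Build_PreFunctor n (Grid s) (Grid s') (gmap_ob f) (fun a b h => gmap_le f h).

Lemma gridmap_rel n (s s' : shape n) (f : smap s s') : is_relfunctor (gridmap f).
Proof.
split => /=.
- by move=> a; apply: eq_irrelevance.
- by move=> *; apply: eq_irrelevance.
- by move=> i a b _ h j /h ->.
- by move=> a b _ h j; rewrite h.
Qed.

Definition Nerve n (C : PreRelCat n) : MSSet n :=
  {| sx := fun s => {F : PreFunctor (Grid s) C | is_relfunctor F};
     sact := fun s s' f F =>
       exist _ (fcomp (sval F) (gridmap f)) (is_relfunctor_comp (svalP F) (gridmap_rel f)) |}.

Definition NerveMap n (C D : PreRelCat n) (G : PreFunctor C D) (HG : is_relfunctor G) :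
  forall s, sx (Nerve C) s -> sx (Nerve D) s :=
  fun s F => exist _ (fcomp G (sval F)) (is_relfunctor_comp HG (svalP F)).

(* In Rel^n Cat: a cocone (T, leg) under the diagram K : I -> Rel^n Cat
   is a colimit cocone (i.e. the canonical map colim K -> T is an iso). *)
Definition is_colim_relcat n (I : PreRelCat n) (K : ob I -> PreRelCat n)
  (Km : forall o o', hom I o o' -> PreFunctor (K o) (K o'))
  (T : PreRelCat n) (leg : forall o, PreFunctor (K o) T) : Prop :=
  [/\ (forall o, is_relfunctor (leg o)),
      (forall o o' (u : hom I o o'), feq (fcomp (leg o') (Km o o' u)) (leg o)) &
      (forall D : PreRelCat n, is_nrelcat D ->
        forall G : forall o, PreFunctor (K o) D,
        (forall o, is_relfunctor (G o)) ->
        (forall o o' (u : hom I o o'), feq (fcomp (G o') (Km o o' u)) (G o)) ->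
        exists H : PreFunctor T D,
          [/\ is_relfunctor H,
              (forall o, feq (fcomp H (leg o)) (G o)) &
              (forall H' : PreFunctor T D, is_relfunctor H' ->
                 (forall o, feq (fcomp H' (leg o)) (G o)) -> feq H' H)])].

Definition is_colim_msset n (I : PreRelCat n) (K : ob I -> MSSet n)
  (Km : forall o o', hom I o o' -> forall s, sx (K o) s -> sx (K o') s)
  (T : MSSet n) (leg : forall o s, sx (K o) s -> sx T s) : Prop :=
  [/\ (forall o, is_msmap (leg o)),
      (forall o o' (u : hom I o o') s z, leg o' s (Km o o' u s z) = leg o s z) &
      (forall Y : MSSet n, is_msset Y ->
        forall g : forall o s, sx (K o) s -> sx Y s,
        (forall o, is_msmap (g o)) ->
        (forall o o' (u : hom I o o') s z, g o' s (Km o o' u s z) = g o s z) ->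
        exists h : forall s, sx T s -> sx Y s,
          [/\ is_msmap h,
              (forall o s z, h s (leg o s z) = g o s z) &
              (forall h' : forall s, sx T s -> sx Y s, is_msmap h' ->
                 (forall o s z, h' s (leg o s z) = g o s z) ->
                 forall s z, h' s z = h s z)])].

Arguments is_colim_relcat {n} I K Km T leg.
Arguments is_colim_msset {n} I K Km T leg.

(* The category of simplices Delta_rel Delta[s] has the terminal object
   (s, id_s), so a cocone G under Delta_rel F is determined by the values
   G_x(s, id_s) at the simplices x of X, and these assemble into the unique
   relative functor Delta_rel X -> D through which G factors.  For the nerve,
   the grid p_n x ... x p_1 x q has the terminal object (p_n, ..., p_1, q):
   a relative functor from the grid to Delta_rel X therefore factors through
   the leg Delta_rel Delta[s] -> Delta_rel X of its value at the top, which
   makes N Delta_rel X the colimit of the nerves as well. *)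
From Pilot Require Import Defs.
From Stdlib Require Import FunctionalExtensionality ProofIrrelevance Eqdep.
From HB Require Import structures.
From mathcomp Require Import all_boot.

Set Implicit Arguments.
Unset Strict Implicit.
Unset Printing Implicit Defensive.

Section TotalArrows.
Variables (n : nat) (D : PreRelCat n).

(* Arrows with their endpoints packed together, so that arrows between
   propositionally (but not definitionally) equal objects can be compared. *)
Definition tot_hom (a b : ob D) (h : hom D a b) :=
  existT (fun ab : ob D * ob D => hom D ab.1 ab.2) (a, b) h.

Lemma tot_hom_inj (a b : ob D) (h h' : hom D a b) : tot_hom h = tot_hom h' -> h = h'.
Proof. exact: (inj_pair2 _ (fun ab : ob D * ob D => hom D ab.1 ab.2)). Qed.

Lemma tot_hom_comp (a b c a' b' c' : ob D) (k : hom D a b) (h : hom D b c)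
  (k' : hom D a' b') (h' : hom D b' c') :
  tot_hom k = tot_hom k' -> tot_hom h = tot_hom h' ->
  tot_hom (Defs.comp h k) = tot_hom (Defs.comp h' k').
Proof.
move=> ek eh.
have ea : a = a' := congr1 (fun p => (projT1 p).1) ek.
have eb : b = b' := congr1 (fun p => (projT1 p).2) ek.
have ec : c = c' := congr1 (fun p => (projT1 p).2) eh.
by subst; rewrite (tot_hom_inj ek) (tot_hom_inj eh).
Qed.

Definition cast_src (a a' b : ob D) (e : a = a') (h : hom D a b) : hom D a' b :=
  match e in _ = z return hom D z b with erefl => h end.

Lemma tot_hom_cast_src (a a' b : ob D) (e : a = a') (h : hom D a b) :
  tot_hom (cast_src e h) = tot_hom h.
Proof. by case: _ / e. Qed.

Lemma cast_src_stable (P : forall a b, hom D a b -> Prop) (a a' b : ob D) (e : a = a')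
  (h : hom D a b) : P _ _ h -> P _ _ (cast_src e h).
Proof. by case: _ / e. Qed.

Lemma feq_eq (C : PreRelCat n) (F G : PreFunctor C D) : feq F G -> F = G.
Proof.
case: F G => [fo fh] [go gh] [/= eob ehom].
have e : fo = go by apply: functional_extensionality.
subst; congr Build_PreFunctor.
do 3 apply: functional_extensionality_dep => ?.
exact: tot_hom_inj (ehom _ _ _).
Qed.

End TotalArrows.

Lemma tot_hom_fhom n (C D : PreRelCat n) (F : PreFunctor C D) (a b a' b' : ob C)
  (k : hom C a b) (k' : hom C a' b') :
  tot_hom k = tot_hom k' -> tot_hom (fhom F k) = tot_hom (fhom F k').
Proof.
move=> ek.
have ea : a = a' := congr1 (fun p => (projT1 p).1) ek.
have eb : b = b' := congr1 (fun p => (projT1 p).2) ek.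
by subst; rewrite (tot_hom_inj ek).
Qed.

Lemma feq_fcompr n (C D E : PreRelCat n) (A B : PreFunctor D E) (Z : PreFunctor C D) :
  feq A B -> feq (fcomp A Z) (fcomp B Z).
Proof. by case=> eob ehom; split => /= *; [apply: eob | apply: ehom]. Qed.

Lemma smap_id_comp n (s s' : Defs.shape n) (f : smap s s') : smap_comp (smap_id s') f = f.
Proof.
case: f => f1 f2; rewrite /smap_comp /=; congr pair.
  by apply: functional_extensionality_dep => i; apply: mono_eq => x; rewrite /= !ffunE.
by apply: mono_eq => x; rewrite /= !ffunE.
Qed.

Section DeltaRelArrows.
Variables (n : nat) (X : MSSet n) (HX : is_msset X).

Lemma DeltaRel_tot_hom_eq (o0 o1 : ob (DeltaRel HX)) (x0 : sx X (projT1 o0))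
  (x1 : sx X (projT1 o1))
  (k : hom (DeltaRel HX) (existT _ (projT1 o0) x0) (existT _ (projT1 o1) x1))
  (k' : hom (DeltaRel HX) o0 o1) :
  x0 = projT2 o0 -> x1 = projT2 o1 -> sval k = sval k' -> tot_hom k = tot_hom k'.
Proof.
move=> e0 e1 e; subst x0 x1; move: o0 o1 k k' e => [s0 y0] [s1 y1] /= k k' e.
by rewrite /tot_hom; congr existT; apply: sig_eq.
Qed.

Lemma DeltaRel_tot_hom_eq_existT (s0 s1 : Defs.shape n) (x0 x0' : sx X s0) (x1 x1' : sx X s1)
  (k : hom (DeltaRel HX) (existT _ s0 x0) (existT _ s1 x1))
  (k' : hom (DeltaRel HX) (existT _ s0 x0') (existT _ s1 x1')) :
  x0 = x0' -> x1 = x1' -> sval k = sval k' -> tot_hom k = tot_hom k'.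
Proof. exact: (@DeltaRel_tot_hom_eq (existT _ s0 x0') (existT _ s1 x1')). Qed.

Lemma DeltaRel_ob_eta (o : ob (DeltaRel HX)) (y : sx X (projT1 o)) :
  y = projT2 o -> existT (fun s => sx X s) (projT1 o) y = o.
Proof. by case: o y => s x /= y ->. Qed.

Lemma DRleg_DRmap (o o' : ob (DeltaRel HX)) (u : hom (DeltaRel HX) o o') :
  feq (fcomp (DRleg o') (DRmap u)) (DRleg o).
Proof.
split=> [[s0 g] | [s0 g] [s1 g'] k] /=; first by rewrite /yon /post (proj2 HX) (svalP u).
by apply: DeltaRel_tot_hom_eq_existT => //=; rewrite /yon /post (proj2 HX) (svalP u).
Qed.

End DeltaRelArrows.

Section DeltaRelColimit.
Variables (n : nat) (X : MSSet n) (HX : is_msset X).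
Notation DX := (DeltaRel HX).

Definition DRep_top (o : ob DX) : ob (DRep (projT1 o)) :=
  existT (fun s0 => smap s0 (projT1 o)) (projT1 o) (smap_id (projT1 o)).

Lemma to_top_proof (o o' : ob DX) (f : hom DX o o') (y : smap (projT1 o) (projT1 o'))
  (e : y = sval f) : smap_comp (smap_id (projT1 o')) (sval f) = y.
Proof. by rewrite smap_id_comp e. Qed.

(* The map (s, y) -> (s', id) of Delta_rel Delta[s'] given by f; the source is
   indexed by any y equal to f to fit objects that are only propositionally (s, f). *)
Definition to_top (o o' : ob DX) (f : hom DX o o') (y : smap (projT1 o) (projT1 o'))
  (e : y = sval f) :
  hom (DRep (projT1 o')) (existT (fun s0 => smap s0 (projT1 o')) (projT1 o) y) (DRep_top o') :=
  exist _ (sval f) (to_top_proof e).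

Section Extension.
Variables (D : PreRelCat n) (G : forall o : ob DX, PreFunctor (DRep (projT1 o)) D).
Hypothesis (Grel : forall o, is_relfunctor (G o)).
Hypothesis (Gcocone : forall o o' (u : hom DX o o'), feq (fcomp (G o') (DRmap u)) (G o)).

Lemma cocone_ob_top (o o' : ob DX) (f : hom DX o o') :
  fob (G o') (existT (fun s0 => smap s0 (projT1 o')) (projT1 o) (sval f))
  = fob (G o) (DRep_top o).
Proof. by rewrite -(proj1 (Gcocone f) (DRep_top o)) /= /post smap_comp_id. Qed.

Definition cocone_ext : PreFunctor DX D :=
  @Build_PreFunctor n DX D (fun o => fob (G o) (DRep_top o))
    (fun o o' f => cast_src (cocone_ob_top f) (fhom (G o') (to_top (erefl (sval f))))).

Lemma cocone_ext_idm (o : ob DX) : fhom cocone_ext (idm o) = idm (fob cocone_ext o).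
Proof.
apply: tot_hom_inj; rewrite /= tot_hom_cast_src.
have -> : to_top (erefl (sval (idm o))) = idm (DRep_top o) by apply: sig_eq.
by case: (Grel o) => -> _ _ _.
Qed.

Lemma cocone_ext_comp (o1 o2 o3 : ob DX) (f : hom DX o1 o2) (g : hom DX o2 o3) :
  fhom cocone_ext (Defs.comp g f) = Defs.comp (fhom cocone_ext g) (fhom cocone_ext f).
Proof.
apply: tot_hom_inj; rewrite /= tot_hom_cast_src.
have gid : smap_comp (sval g) (smap_id _) = sval g by exact: smap_comp_id.
(* to_top (g f) factors as (to_top g) o (Delta_rel Delta[g] (to_top f)) *)
transitivity (tot_hom (fhom (G o3) (Defs.comp (to_top gid)
                                         (fhom (DRmap g) (to_top (erefl (sval f))))))).
  by apply: tot_hom_fhom; rewrite /tot_hom; congr existT; exact: sig_eq.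
case: (Grel o3) => _ -> _ _; apply: tot_hom_comp.
  by rewrite tot_hom_cast_src; exact: (proj2 (Gcocone g) _ _ (to_top _)).
by rewrite tot_hom_cast_src; apply: tot_hom_fhom; exact: DeltaRel_tot_hom_eq_existT.
Qed.

Lemma cocone_ext_rel : is_relfunctor cocone_ext.
Proof.
split; [exact: cocone_ext_idm | exact: cocone_ext_comp | |].
- move=> i o o' f hf; apply: (cast_src_stable (P := fun a b h => vmor i h)).
  by case: (Grel o') => _ _ Gv _; apply: Gv.
- move=> o o' f hf; apply: (cast_src_stable (P := fun a b h => wmor h)).
  by case: (Grel o') => _ _ _ Gw; apply: Gw.
Qed.

Lemma cocone_ext_leg (o : ob DX) : feq (fcomp cocone_ext (DRleg o)) (G o).
Proof.
split=> [[s0 g] | [s0 g] [s1 g'] k] /=.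
  exact: esym (cocone_ob_top (exist _ g erefl : hom DX (existT _ s0 (yon (projT2 o) g)) o)).
pose u : hom DX (existT _ s1 (yon (projT2 o) g')) o := exist _ g' erefl.
etransitivity; first exact: tot_hom_cast_src.
etransitivity; first exact: esym (proj2 (Gcocone u) _ _ _).
apply: (@tot_hom_fhom _ _ _ (G o)) => /=; apply: DeltaRel_tot_hom_eq_existT => //=.
- exact: (svalP k).
- exact: smap_comp_id.
Qed.

Lemma cocone_ext_unique (H : PreFunctor DX D) :
  (forall o, feq (fcomp H (DRleg o)) (G o)) -> feq H cocone_ext.
Proof.
move=> HG; split=> [[s x] | [s x] [s' x'] f] /=.
  by rewrite -(proj1 (HG (existT _ s x)) (DRep_top _)) /= /yon (proj1 HX).
etransitivity; last exact: esym (tot_hom_cast_src _ _).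
etransitivity; last exact: proj2 (HG (existT _ s' x')) _ _ _.
apply: (@tot_hom_fhom _ _ _ H); symmetry; apply: DeltaRel_tot_hom_eq_existT => //=.
- exact: (svalP f).
- by rewrite /yon (proj1 HX).
Qed.

End Extension.

(* The universal property holds even for targets that are not n-relative categories. *)
Lemma DeltaRel_colim :
  is_colim_relcat DX (fun o => DRep (projT1 o)) (fun o o' u => DRmap u)
    DX (fun o => DRleg o).
Proof.
split; [exact: DRleg_rel | exact: DRleg_DRmap |].
move=> D _ G Grel Gcocone; exists (cocone_ext Gcocone); split.
- exact: cocone_ext_rel.
- exact: cocone_ext_leg.
- by move=> H _; exact: cocone_ext_unique.
Qed.

End DeltaRelColimit.

Section Grid.
Variables (n : nat) (s : Defs.shape n).

Definition grid_top : gob s := (fun i => ord_max, ord_max).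

Lemma gle_top (a : gob s) : gle a grid_top.
Proof. by apply/andP; split; [apply/forallP => i |]; exact: leq_ord. Qed.

Lemma grid_fhom_comp (D : PreRelCat n) (F : PreFunctor (Grid s) D) (a b c : gob s)
  (h : gle a b) (k : gle b c) (l : gle a c) : is_relfunctor F ->
  Defs.comp (fhom F (k : hom (Grid s) b c)) (fhom F (h : hom (Grid s) a b))
  = fhom F (l : hom (Grid s) a c).
Proof.
case=> _ Fcomp _ _.
have -> : l = Defs.comp (k : hom (Grid s) b c) (h : hom (Grid s) a b) by apply: eq_irrelevance.
by rewrite Fcomp.
Qed.

End Grid.

Section NerveColimit.
Variables (n : nat) (X : MSSet n) (HX : is_msset X).
Notation DX := (DeltaRel HX).

Section Factorization.
Variables (s : Defs.shape n) (F : PreFunctor (Grid s) DX) (HF : is_relfunctor F).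

Definition grid_top_ob : ob DX := fob F (grid_top s).

Definition to_grid_top (a : gob s) : hom DX (fob F a) grid_top_ob :=
  fhom F (gle_top a : hom (Grid s) a (grid_top s)).

Definition factor_ob (a : gob s) : ob (DRep (projT1 grid_top_ob)) :=
  existT (fun s0 => smap s0 (projT1 grid_top_ob)) (projT1 (fob F a)) (sval (to_grid_top a)).

Lemma factor_hom_proof (a b : gob s) (h : hom (Grid s) a b) :
  sact (sval (fhom F h)) (projT2 (factor_ob b)) = projT2 (factor_ob a).
Proof. exact (congr1 sval (grid_fhom_comp h (gle_top b) (gle_top a) HF)). Qed.

Definition grid_factor : PreFunctor (Grid s) (DRep (projT1 grid_top_ob)) :=
  @Build_PreFunctor n (Grid s) (DRep (projT1 grid_top_ob)) factor_ob
    (fun a b h => exist _ (sval (fhom F h)) (factor_hom_proof h)).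

Lemma grid_factor_rel : is_relfunctor grid_factor.
Proof.
case: HF => Fid Fcomp Fv Fw; split.
- by move=> a; apply: sig_eq; rewrite /= Fid.
- by move=> a b c f g; apply: sig_eq; rewrite /= Fcomp.
- by move=> i a b h /Fv.
- by move=> a b h /Fw.
Qed.

Lemma DRleg_grid_factor : fcomp (DRleg grid_top_ob) grid_factor = F.
Proof.
apply: feq_eq; split=> [a | a b h] /=; first exact/DeltaRel_ob_eta/(svalP (to_grid_top a)).
by apply: DeltaRel_tot_hom_eq => //=; exact: (svalP (to_grid_top _)).
Qed.

End Factorization.

Definition nerve_simplex_factor (s : Defs.shape n) (F : sx (Nerve DX) s) :
  sx (Nerve (DRep (projT1 (grid_top_ob (sval F))))) s :=
  exist _ (grid_factor (svalP F)) (grid_factor_rel (svalP F)).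

Lemma NerveMap_DRleg_factor (s : Defs.shape n) (F : sx (Nerve DX) s) :
  NerveMap (DRleg_rel _) (nerve_simplex_factor F) = F.
Proof. by apply: sig_eq; rewrite /= DRleg_grid_factor. Qed.

Section Extension.
Variables (Y : MSSet n) (g : forall (o : ob DX) s, sx (Nerve (DRep (projT1 o))) s -> sx Y s).
Arguments g : clear implicits.
Hypothesis (gmap : forall o, is_msmap (g o)).
Hypothesis (gcocone : forall o o' (u : hom DX o o') s z,
  g o' s (NerveMap (DRmap_rel u) z) = g o s z).

Definition nerve_cocone_ext (s : Defs.shape n) (F : sx (Nerve DX) s) : sx Y s :=
  g _ s (nerve_simplex_factor F).

Lemma nerve_cocone_ext_msmap : is_msmap nerve_cocone_ext.
Proof.
move=> s s' f F; rewrite /nerve_cocone_ext -gmap.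
pose u := to_grid_top (sval F) (gmap_ob f (grid_top s)).
rewrite -(gcocone u); congr (g _ s _); apply: sig_eq => /=; apply: feq_eq.
split=> [a | a b h] /=.
  by congr existT; exact (congr1 sval (grid_fhom_comp _ _ _ (svalP F))).
by apply: (@DeltaRel_tot_hom_eq_existT _ _ (Rep_msset _)) => //=;
  exact (congr1 sval (grid_fhom_comp _ _ _ (svalP F))).
Qed.

Lemma nerve_cocone_ext_leg (o : ob DX) (s : Defs.shape n) (z : sx (Nerve (DRep (projT1 o))) s) :
  nerve_cocone_ext (NerveMap (DRleg_rel o) z) = g o s z.
Proof.
pose u : hom DX (grid_top_ob (sval (NerveMap (DRleg_rel o) z))) o :=
  exist _ (projT2 (fob (sval z) (grid_top s))) erefl.
pose to_top a := fhom (sval z) (gle_top a : hom (Grid s) a (grid_top s)).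
rewrite /nerve_cocone_ext -(gcocone u); congr (g o s _); apply: sig_eq => /=.
apply: feq_eq; split=> [a | a b h] /=; first exact/DeltaRel_ob_eta/(svalP (to_top a)).
by apply: DeltaRel_tot_hom_eq => //=; exact: (svalP (to_top _)).
Qed.

Lemma nerve_cocone_ext_unique (h : forall s, sx (Nerve DX) s -> sx Y s) :
  (forall o s z, h s (NerveMap (DRleg_rel o) z) = g o s z) ->
  forall s F, h s F = nerve_cocone_ext F.
Proof. by move=> hg s F; rewrite -[in LHS](NerveMap_DRleg_factor F) hg. Qed.

End Extension.

Lemma Nerve_DeltaRel_colim :
  is_colim_msset DX (fun o => Nerve (DRep (projT1 o)))
    (fun o o' u => NerveMap (DRmap_rel u))
    (Nerve DX) (fun o => NerveMap (DRleg_rel o)).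
Proof.
split.
- by move=> o s s' f z; apply: sig_eq.
- move=> o o' u s z; apply: sig_eq => /=; apply: feq_eq.
  exact: feq_fcompr (DRleg_DRmap u).
move=> Y _ g gmap gcocone; exists (nerve_cocone_ext g); split.
- exact: nerve_cocone_ext_msmap.
- exact: nerve_cocone_ext_leg.
- by move=> h _; exact: nerve_cocone_ext_unique.
Qed.

End NerveColimit.

Theorem proposition5p7 (n : nat) (hn : 0 < n) (X : MSSet n) (HX : is_msset X) :
  is_colim_relcat (DeltaRel HX)
    (fun o : ob (DeltaRel HX) => DRep (projT1 o))
    (fun o o' u => DRmap u)
    (DeltaRel HX) (fun o => DRleg o)
  /\
  is_colim_msset (DeltaRel HX)
    (fun o : ob (DeltaRel HX) => Nerve (DRep (projT1 o)))
    (fun o o' u => NerveMap (DRmap_rel u))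
    (Nerve (DeltaRel HX)) (fun o => NerveMap (DRleg_rel o)).
Proof. split; [exact: DeltaRel_colim | exact: Nerve_DeltaRel_colim]. Qed.
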